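(* Consider a multi-unit auction with $2$ identical items and $2$ unknown single-minded bidders. Let $\mathcal M_1$ be the randomized mechanism that with probability $1/2$ runs a second-price (ascending) auction for the grand bundle of both items, and with probability $1/2$ allocates a single item to a uniformly random bidder and then runs a second-price (ascending) auction for the second item among both bidders. Then $\mathcal M_1$ achieves a $\frac{4}{3}$-approximation to the optimal social welfare: on every instance, its expected welfare under truthful play is at least $\frac{3}{4}\mathrm{OPT}$.
   Context: A single-minded bidder $i$ has private $x_i\ge0$ and demand $d_i\in\{1,2\}$ with $v_i(q)=x_i$ for $q\ge d_i$ and $0$ otherwise. In the auction for the second item, a bidder already holding one item bids her marginal value for the second item; the highest bidder wins. $\mathrm{OPT}$ is the maximum of $v_1(q_1)+v_2(q_2)$ over nonnegative integers with $q_1+q_2\le2$. *)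

From HB Require Import structures.
From mathcomp Require Import all_boot all_order all_algebra.
Set Implicit Arguments. Unset Strict Implicit. Unset Printing Implicit Defensive.
Import Order.TTheory GRing.Theory Num.Theory.
Local Open Scope ring_scope.

Section Auction.
Variable R : realFieldType.

Definition sm_val (x : R) (d : nat) (q : nat) : R := if (d <= q)%N then x else 0.

Definition OPT (v1 v2 : nat -> R) : R :=
  \big[Num.max/0]_(q1 < 3)
    \big[Num.max/0]_(q2 < 3 | (q1 + q2 <= 2)%N) (v1 q1 + v2 q2).

(* Second-price (ascending) auction for the grand bundle: each bidder bids
   her value for both items; the highest bidder wins (ties to bidder 1, which
   does not affect welfare). *)
Definition bundle_welfare (v1 v2 : nat -> R) : R :=
  if v2 2%N <= v1 2%N then v1 2%N else v2 2%N.

(* Bidder with valuation vh already holds one item; the second item is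
   auctioned among both bidders. The holder bids her marginal value
   vh 2 - vh 1, the other bidder bids her marginal value vo 1 - vo 0.
   Highest bidder wins (ties to the holder; welfare is the same either way). *)
Definition second_item_welfare (vh vo : nat -> R) : R :=
  if vo 1%N - vo 0%N <= vh 2%N - vh 1%N then vh 2%N + vo 0%N
  else vh 1%N + vo 1%N.

Definition M1_welfare (v1 v2 : nat -> R) : R :=
  2^-1 * bundle_welfare v1 v2
  + 2^-1 * (2^-1 * second_item_welfare v1 v2 + 2^-1 * second_item_welfare v2 v1).

End Auction.

(** The two welfare formulas hide a max: each auction hands the contested
    bundle to whoever values it most, so the bundle auction yields the better
    of the allocations (2,0) and (0,2), and the second-item auction with
    holder h yields the better of "h gets both" and (1,1).  For monotone
    valuations with v 0 = 0 the optimum is attained at (2,0), (0,2) or (1,1).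
    If it is one of the first two, the bundle auction (probability 1/2) and
    the second-item auction with that bidder as holder (probability 1/4) both
    attain it; if it is (1,1), both second-item auctions attain it
    (probability 1/2) and the bundle auction still gets at least half of it,
    since v1 1 + v2 1 <= v1 2 + v2 2 <= 2 max (v1 2) (v2 2). *)

From HB Require Import structures.
From mathcomp Require Import all_boot all_order all_algebra.
From mathcomp Require Import ring lra.
Import Order.TTheory GRing.Theory Num.Theory.
Local Open Scope ring_scope.

Section Welfare.
Variable R : realFieldType.
Implicit Types (v vh vo : nat -> R) (x a b c M : R).

Lemma bundle_welfareE v1 v2 : bundle_welfare v1 v2 = Num.max (v1 2%N) (v2 2%N).
Proof. by rewrite /bundle_welfare maxEge. Qed.

Lemma second_item_welfareE vh vo :
  second_item_welfare vh vo = Num.max (vh 1%N + vo 1%N) (vh 2%N + vo 0%N).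
Proof.
rewrite /second_item_welfare maxEle; congr (if _ then _ else _).
by rewrite -subr_ge0 -[in RHS]subr_ge0; congr (0 <= _); ring.
Qed.

Lemma OPT_le v1 v2 M :
  0 <= M -> (forall q1 q2, (q1 + q2 <= 2)%N -> v1 q1 + v2 q2 <= M) ->
  OPT v1 v2 <= M.
Proof.
move=> M_ge0 alloc_le.
have max_le a b : a <= M -> b <= M -> Num.max a b <= M by rewrite ge_max => -> ->.
apply: (big_ind (fun x => x <= M)) => // q1 _.
by apply: (big_ind (fun x => x <= M)) => // q2; apply: alloc_le.
Qed.

Lemma three_quarters_max_le [a b c : R] :
  0 <= a -> 0 <= b -> c <= a + b ->
  3 / 4 * Num.max (Num.max a b) c <=
  2^-1 * Num.max a b + (2^-1 * (2^-1 * Num.max c a + 2^-1 * Num.max c b)).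
Proof.
move=> a_ge0 b_ge0 c_le.
have /andP[c_ca a_ca] : (c <= Num.max c a) && (a <= Num.max c a).
  by rewrite !le_max !lexx orbT.
have /andP[c_cb b_cb] : (c <= Num.max c b) && (b <= Num.max c b).
  by rewrite !le_max !lexx orbT.
have [ab|ba] := leP a b.
- by have [bc|cb] := leP b c; lra.
- by have [ac|ca] := leP a c; lra.
Qed.

Lemma sm_val0 x d : (0 < d)%N -> sm_val x d 0 = 0.
Proof. by case: d. Qed.

Lemma sm_val_homo x d : 0 <= x -> {homo sm_val x d : p q / (p <= q)%N >-> p <= q}.
Proof.
move=> x_ge0 p q le_pq; rewrite /sm_val.
case: ifP => [le_dp | _]; last by case: ifP.
by rewrite (leq_trans le_dp le_pq).
Qed.

Section Monotone.
Variables v1 v2 : nat -> R.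
Hypotheses (v1_0 : v1 0%N = 0) (v2_0 : v2 0%N = 0).
Hypotheses (v1_homo : {homo v1 : p q / (p <= q)%N >-> p <= q})
           (v2_homo : {homo v2 : p q / (p <= q)%N >-> p <= q}).

Lemma OPT_le_best_split :
  OPT v1 v2 <= Num.max (Num.max (v1 2%N) (v2 2%N)) (v1 1%N + v2 1%N).
Proof.
set M := Num.max _ _.
have v1_le2 : v1 2%N <= M by rewrite !le_max lexx.
have v2_le2 : v2 2%N <= M by rewrite !le_max lexx orbT.
have split_le : v1 1%N + v2 1%N <= M by rewrite le_max lexx orbT.
have /andP[v1_1_ge0 v1_12] : 0 <= v1 1%N <= v1 2%N by rewrite -{1}v1_0 !v1_homo.
have /andP[v2_1_ge0 v2_12] : 0 <= v2 1%N <= v2 2%N by rewrite -{1}v2_0 !v2_homo.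
apply: OPT_le; first lra.
move=> [|[|[|q1]]] [|[|[|q2]]] //= _; rewrite ?v1_0 ?v2_0; lra.
Qed.

Lemma M1_welfare_approx : 3 / 4 * OPT v1 v2 <= M1_welfare v1 v2.
Proof.
rewrite /M1_welfare bundle_welfareE !second_item_welfareE v1_0 v2_0 !addr0.
rewrite [v2 1%N + _]addrC.
have v1_ge0 : 0 <= v1 2%N by rewrite -v1_0 v1_homo.
have v2_ge0 : 0 <= v2 2%N by rewrite -v2_0 v2_homo.
have split_le : v1 1%N + v2 1%N <= v1 2%N + v2 2%N by rewrite lerD ?v1_homo ?v2_homo.
apply: le_trans (three_quarters_max_le v1_ge0 v2_ge0 split_le).
by rewrite ler_wpM2l ?divr_ge0 ?OPT_le_best_split.
Qed.

End Monotone.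
End Welfare.

Theorem claimB2 (R : realFieldType) (x1 x2 : R) (d1 d2 : nat) :
  0 <= x1 -> 0 <= x2 ->
  (d1 == 1)%N || (d1 == 2)%N -> (d2 == 1)%N || (d2 == 2)%N ->
  (3 / 4) * OPT (sm_val x1 d1) (sm_val x2 d2)
    <= M1_welfare (sm_val x1 d1) (sm_val x2 d2).
Proof.
move=> x1_ge0 x2_ge0 d1_12 d2_12.
have demand_gt0 d : (d == 1)%N || (d == 2)%N -> (0 < d)%N by case/orP => /eqP->.
apply: M1_welfare_approx; rewrite ?sm_val0 ?demand_gt0 //; exact: sm_val_homo.
Qed.
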